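(* Let $S$ be an $E$-unitary inverse semigroup, $A$ a semilattice of groups and $\Lambda=(\alpha,\lambda,f)$ a Sieben twisted $S$-module structure on $A$. Define, for $x\in\mathcal G(S)$: $D_x=\bigsqcup_{s\in x}A_{\alpha(ss^{-1})}$; $\theta_x:D_{x^{-1}}\to D_x$ by $\theta_x(a)=\lambda_s(a)$, where $s\in x$ is the unique element with $\alpha(s^{-1}s)=aa^{-1}$; and for $x,y\in\mathcal G(S)$ the pair $w_{x,y}$ of maps on $D_xD_{xy}$ by $w_{x,y}a=f(s,s^{-1}t)a$, $aw_{x,y}=af(s,s^{-1}t)$, where $s\in x$, $t\in xy$ are the unique elements with $\alpha(ss^{-1})=\alpha(tt^{-1})=aa^{-1}$. Then $\Theta=(\theta,w)$ is a twisted partial action of $\mathcal G(S)$ on $A$. Moreover, the crossed products $A*_\Lambda S$ and $A*_\Theta\mathcal G(S)$ are equivalent as extensions of $A$ by $\mathcal G(S)$.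
   Context: A semilattice of groups is an inverse semigroup $A$ with central idempotents; $A_e=\{a: aa^{-1}=a^{-1}a=e\}$. $\sigma$ is the minimum group congruence on $S$, $\mathcal G(S)=S/\sigma$ (elements are $\sigma$-classes), $\sigma^\natural$ the quotient map; $E$-unitary means $e\le s$, $e\in E(S)$ imply $s\in E(S)$. Relatively invertible endomorphism $\varphi$ of $A$: there are $\bar\varphi\in\mathrm{End}\,A$, $e_\varphi\in E(A)$ with $\bar\varphi\varphi(a)=e_\varphi a$, $\varphi\bar\varphi(a)=\varphi(e_\varphi)a$, $e_\varphi$ the identity of $\bar\varphi(A)$, $\varphi(e_\varphi)$ the identity of $\varphi(A)$. A twisted $S$-module structure is $(\alpha,\lambda,f)$ with $\alpha:E(S)\to E(A)$ an isomorphism, $\lambda_s$ relatively invertible endomorphisms, $f(s,t)\in A_{\alpha(stt^{-1}s^{-1})}$, and (i) $\lambda_e(a)=\alpha(e)a$; (ii) $\lambda_s(\alpha(e))=\alpha(ses^{-1})$; (iii) $\lambda_s\lambda_t(a)=f(s,t)\lambda_{st}(a)f(s,t)^{-1}$; (iv) $f(se,e)=\alpha(ses^{-1})$, $f(e,es)=\alpha(ess^{-1})$; (v) $\lambda_s(f(t,u))f(s,tu)=f(s,t)f(st,u)$; Sieben: additionally $f(s,e)=\alpha(ses^{-1})$, $f(e,s)=\alpha(ess^{-1})$ ($e\in E(S)$). Crossed product $A*_\Lambda S=\{a\delta_s: aa^{-1}=\alpha(ss^{-1})\}$ with $a\delta_s\cdot b\delta_t=a\lambda_s(b)f(s,t)\delta_{st}$,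 regarded as an extension of $A$ by $\mathcal G(S)$ via $a\mapsto a\delta_{\alpha^{-1}(aa^{-1})}$ and $a\delta_s\mapsto\sigma^\natural(s)$. Multipliers of a semigroup $T$: pairs $(L,R)$ of maps with $L(st)=L(s)t$, $R(st)=sR(t)$, $sL(t)=R(s)t$, written $ws=L(s)$, $sw=R(s)$; monoid $\mathcal M(T)$, unit group $\mathcal U(\mathcal M(T))$. A twisted partial action of a group $H$ on $A$ is $(\theta,w)$ with isomorphisms $\theta_x:D_{x^{-1}}\to D_x$ of nonempty ideals and $w_{x,y}\in\mathcal U(\mathcal M(D_xD_{xy}))$, such that (i) $D_x^2=D_x$, $D_xD_y=D_yD_x$; (ii) $D_1=A$, $\theta_1=\mathrm{id}$; (iii) $\theta_x(D_{x^{-1}}D_y)=D_xD_{xy}$; (iv) $\theta_x\theta_y(s)=w_{x,y}\theta_{xy}(s)w_{x,y}^{-1}$ on $D_{y^{-1}}D_{y^{-1}x^{-1}}$; (v) $w_{1,x}=w_{x,1}$ = identity of $D_x$; (vi) $\theta_x(sw_{y,z})w_{x,yz}=\theta_x(s)w_{x,y}w_{xy,z}$ on $D_{x^{-1}}D_yD_{yz}$. Crossed product $A*_\Theta H=\{a\delta_x: a\in D_x\}$ with $a\delta_x\cdot b\delta_y=\theta_x(\theta_x^{-1}(a)b)w_{x,y}\delta_{xy}$, an extension of $A$ by $H$ via $a\mapsto a\delta_1$, $a\delta_x\mapsto x$. Extensions $(U,i,j)$, $(U',i',j')$ of $A$ by a group (i.e. $i$ mono, $j$ epi, $i(A)=j^{-1}(1)$)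 are equivalent if there is an isomorphism $\mu:U\to U'$ with $\mu\circ i=i'$, $j'\circ\mu=j$. *)

Set Implicit Arguments.
Unset Strict Implicit.

Record InvSemigroup := {
  is_car :> Type;
  is_mul : is_car -> is_car -> is_car;
  is_inv : is_car -> is_car;
  is_assoc : forall a b c, is_mul a (is_mul b c) = is_mul (is_mul a b) c;
  is_inv_l : forall a, is_mul (is_mul a (is_inv a)) a = a;
  is_inv_r : forall a, is_mul (is_mul (is_inv a) a) (is_inv a) = is_inv a;
  is_inv_uniq : forall a b, is_mul (is_mul a b) a = a ->
                            is_mul (is_mul b a) b = b -> b = is_inv a }.

Declare Scope isg_scope.
Delimit Scope isg_scope with isg.
Notation "x ** y" := (is_mul x y) (at level 40, left associativity) : isg_scope.
Notation "x ^-1" := (is_inv x) (at level 3, left associativity) : isg_scope.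
Local Open Scope isg_scope.

Section InvSemigroupDefs.
Variable S : InvSemigroup.

Definition idem (e : S) : Prop := e ** e = e.

Definition nat_le (s t : S) : Prop := exists e, idem e /\ s = e ** t.

Definition E_unitary : Prop :=
  forall e s, idem e -> nat_le e s -> idem s.

(* semilattice of groups: inverse semigroup with central idempotents *)
Definition semilattice_of_groups : Prop :=
  forall e a, idem e -> e ** a = a ** e.

Definition in_Ae (e a : S) : Prop := a ** a^-1 = e /\ a^-1 ** a = e.

Definition endo (phi : S -> S) : Prop :=
  forall a b, phi (a ** b) = phi a ** phi b.

Definition identity_of_image (phi : S -> S) (e : S) : Prop :=
  (exists c, phi c = e) /\ forall b, e ** phi b = phi b /\ phi b ** e = phi b.

Definition rel_invertible (phi : S -> S) : Prop :=
  endo phi /\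
  exists (phib : S -> S) (e : S),
    endo phib /\ idem e /\
    (forall a, phib (phi a) = e ** a) /\
    (forall a, phi (phib a) = phi e ** a) /\
    identity_of_image phib e /\
    identity_of_image phi (phi e).

Definition setmul (P Q : S -> Prop) : S -> Prop :=
  fun c => exists a b, P a /\ Q b /\ c = a ** b.

Definition set_eq (P Q : S -> Prop) : Prop := forall a, P a <-> Q a.

Definition is_ideal (P : S -> Prop) : Prop :=
  forall a b, P a -> P (a ** b) /\ P (b ** a).

End InvSemigroupDefs.

Record Group := {
  g_car :> Type;
  g_mul : g_car -> g_car -> g_car;
  g_one : g_car;
  g_inv : g_car -> g_car;
  g_assoc : forall a b c, g_mul a (g_mul b c) = g_mul (g_mul a b) c;
  g_mul1l : forall a, g_mul g_one a = a;
  g_mul1r : forall a, g_mul a g_one = a;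
  g_mulVl : forall a, g_mul (g_inv a) a = g_one;
  g_mulVr : forall a, g_mul a (g_inv a) = g_one }.

Arguments g_mul {_} _ _.
Arguments g_one {_}.
Arguments g_inv {_} _.

Definition hom_to_group (S : InvSemigroup) (K : Group) (p : S -> K) : Prop :=
  forall s t, p (s ** t) = g_mul (p s) (p t).

(* q : S -> H is (up to isomorphism of the target) the quotient map
   sigma^natural : S -> G(S) = S/sigma, sigma the minimum group congruence:
   q is a surjective homomorphism onto a group, and its kernel congruence is
   contained in the kernel of every homomorphism of S into a group (i.e. in
   every group congruence). Then H = G(S) and q = sigma^natural, and
   "s in x" means q s = x. *)
Definition min_group_quotient (S : InvSemigroup) (H : Group) (q : S -> H) : Prop :=
  hom_to_group q /\
  (forall x : H, exists s, q s = x) /\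
  (forall (K : Group) (p : S -> K), hom_to_group p ->
     forall s t, q s = q t -> p s = p t).

Section TwistedModule.
Variables (S A : InvSemigroup).
(* alpha : E(S) -> E(A) is represented by a function S -> A whose values are
   only ever used (and only constrained) on idempotents. *)
Variables (alpha : S -> A) (lam : S -> A -> A) (f : S -> S -> A).

Definition alpha_iso : Prop :=
  (forall e, idem e -> idem (alpha e)) /\
  (forall e g, idem e -> idem g -> alpha (e ** g) = alpha e ** alpha g) /\
  (forall e g, idem e -> idem g -> alpha e = alpha g -> e = g) /\
  (forall g : A, idem g -> exists e, idem e /\ alpha e = g).

Definition twisted_module : Prop :=
  alpha_iso /\
  (forall s, rel_invertible (lam s)) /\
  (forall s t, in_Ae (alpha (s ** t ** t^-1 ** s^-1)) (f s t)) /\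
  (forall e a, idem e -> lam e a = alpha e ** a) /\
  (forall s e, idem e -> lam s (alpha e) = alpha (s ** e ** s^-1)) /\
  (forall s t a, lam s (lam t a) = f s t ** lam (s ** t) a ** (f s t)^-1) /\
  (forall s e, idem e -> f (s ** e) e = alpha (s ** e ** s^-1) /\
                         f e (e ** s) = alpha (e ** s ** s^-1)) /\
  (forall s t u, lam s (f t u) ** f s (t ** u) = f s t ** f (s ** t) u).

Definition sieben_twisted_module : Prop :=
  twisted_module /\
  (forall s e, idem e -> f s e = alpha (s ** e ** s^-1) /\
                         f e s = alpha (e ** s ** s^-1)).
End TwistedModule.

Section Multipliers.
Variable A : InvSemigroup.
(* A multiplier of the subsemigroup T (given as a predicate on A) is a pair
   (L,R) of maps T -> T; here L R : A -> A, only their restriction to T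
   matters.  w s = L s, s w = R s. *)
Definition multiplier (T : A -> Prop) (w : (A -> A) * (A -> A)) : Prop :=
  (forall s, T s -> T (fst w s) /\ T (snd w s)) /\
  (forall s t, T s -> T t ->
     fst w (s ** t) = fst w s ** t /\
     snd w (s ** t) = s ** snd w t /\
     s ** fst w t = snd w s ** t).

Definition mult_inverse (T : A -> Prop) (w w' : (A -> A) * (A -> A)) : Prop :=
  multiplier T w /\ multiplier T w' /\
  (forall s, T s -> fst w (fst w' s) = s /\ fst w' (fst w s) = s /\
                    snd w (snd w' s) = s /\ snd w' (snd w s) = s).

Definition mult_unit (T : A -> Prop) (w : (A -> A) * (A -> A)) : Prop :=
  exists w', mult_inverse T w w'.
End Multipliers.

Section TPA.
Variables (A : InvSemigroup) (H : Group).
Variables (D : H -> A -> Prop) (theta : H -> A -> A)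
          (w : H -> H -> (A -> A) * (A -> A)).

Definition twisted_partial_action : Prop :=
  (forall x, is_ideal (D x) /\ exists a, D x a) /\
  (forall x, (forall a, D (g_inv x) a -> D x (theta x a)) /\
             (forall a b, D (g_inv x) a -> D (g_inv x) b ->
                theta x a = theta x b -> a = b) /\
             (forall b, D x b -> exists a, D (g_inv x) a /\ theta x a = b) /\
             (forall a b, D (g_inv x) a -> D (g_inv x) b ->
                theta x (a ** b) = theta x a ** theta x b)) /\
  (forall x y, mult_unit (setmul (D x) (D (g_mul x y))) (w x y)) /\
  (forall x, set_eq (setmul (D x) (D x)) (D x)) /\
  (forall x y, set_eq (setmul (D x) (D y)) (setmul (D y) (D x))) /\
  (forall a, D g_one a) /\
  (forall a, theta g_one a = a) /\
  (forall x y, set_eq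
     (fun b => exists a, setmul (D (g_inv x)) (D y) a /\ theta x a = b)
     (setmul (D x) (D (g_mul x y)))) /\
  (forall x y w', mult_inverse (setmul (D x) (D (g_mul x y))) (w x y) w' ->
     forall s, setmul (D (g_inv y)) (D (g_mul (g_inv y) (g_inv x))) s ->
       theta x (theta y s) = snd w' (fst (w x y) (theta (g_mul x y) s))) /\
  (forall x a, D x a ->
     fst (w g_one x) a = a /\ snd (w g_one x) a = a /\
     fst (w x g_one) a = a /\ snd (w x g_one) a = a) /\
  (forall x y z s,
     setmul (setmul (D (g_inv x)) (D y)) (D (g_mul y z)) s ->
     snd (w x (g_mul y z)) (theta x (snd (w y z) s)) =
     snd (w (g_mul x y) z) (snd (w x y) (theta x s))).
End TPA.

(* An extension of A by the group H, presented as: a carrier predicate U on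
   an ambient type X, the graph M u v r (r = u v) of the multiplication of U,
   the map i : A -> X and the map j : X -> H. *)
Section Extensions.
Variables (A : InvSemigroup) (H : Group).

Definition is_extension (X : Type) (U : X -> Prop) (M : X -> X -> X -> Prop)
  (i : A -> X) (j : X -> H) : Prop :=
  (forall a, U (i a)) /\
  (forall a b, M (i a) (i b) (i (a ** b))) /\
  (forall a b, i a = i b -> a = b) /\
  (forall u v r, U u -> U v -> M u v r -> j r = g_mul (j u) (j v)) /\
  (forall x : H, exists u, U u /\ j u = x) /\
  (forall u, U u -> (j u = g_one <-> exists a, u = i a)).

Definition equivalent_extensions
  (X : Type) (U : X -> Prop) (M : X -> X -> X -> Prop) (i : A -> X) (j : X -> H)
  (X' : Type) (U' : X' -> Prop) (M' : X' -> X' -> X' -> Prop)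
  (i' : A -> X') (j' : X' -> H) : Prop :=
  is_extension U M i j /\ is_extension U' M' i' j' /\
  exists mu : X -> X',
    (forall u, U u -> U' (mu u)) /\
    (forall u v, U u -> U v -> mu u = mu v -> u = v) /\
    (forall u', U' u' -> exists u, U u /\ mu u = u') /\
    (forall u v r, U u -> U v -> M u v r -> M' (mu u) (mu v) (mu r)) /\
    (forall a, mu (i a) = i' a) /\
    (forall u, U u -> j' (mu u) = j u).
End Extensions.

Section Construction.
Variables (S A : InvSemigroup) (H : Group) (q : S -> H).
Variables (alpha : S -> A) (lam : S -> A -> A) (f : S -> S -> A).

Definition Dom (x : H) (a : A) : Prop :=
  exists s, q s = x /\ in_Ae (alpha (s ** s^-1)) a.

(* crossed product A *_Lambda S, as a subset of A * S *)
Definition cpL_car (u : A * S) : Prop :=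
  fst u ** (fst u)^-1 = alpha (snd u ** (snd u)^-1).

Definition cpL_mul (u v : A * S) : A * S :=
  (fst u ** lam (snd u) (fst v) ** f (snd u) (snd v), snd u ** snd v).

Definition cpL_rel (u v r : A * S) : Prop := r = cpL_mul u v.

(* i(a) = a delta_{alpha^-1(a a^-1)}, with alpha_inv an inverse of alpha on
   idempotents; j(a delta_s) = sigma^natural(s) *)
Definition cpL_i (alpha_inv : A -> S) (a : A) : A * S :=
  (a, alpha_inv (a ** a^-1)).
Definition cpL_j (u : A * S) : H := q (snd u).
End Construction.

Section CrossedTheta.
Variables (A : InvSemigroup) (H : Group).
Variables (D : H -> A -> Prop) (theta : H -> A -> A)
          (w : H -> H -> (A -> A) * (A -> A)).

(* crossed product A *_Theta H, as a subset of A * H *)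
Definition cpT_car (u : A * H) : Prop := D (snd u) (fst u).

(* a delta_x . b delta_y = theta_x(theta_x^-1(a) b) w_{x,y} delta_{xy};
   theta_x^-1(a) is the preimage a' in D_{x^-1} of a under theta_x *)
Definition cpT_rel (u v r : A * H) : Prop :=
  exists a', D (g_inv (snd u)) a' /\ theta (snd u) a' = fst u /\
    r = (snd (w (snd u) (snd v)) (theta (snd u) (a' ** fst v)),
         g_mul (snd u) (snd v)).

Definition cpT_i (a : A) : A * H := (a, g_one).
Definition cpT_j (u : A * H) : H := snd u.
End CrossedTheta.

(* Since [S] is E-unitary, two elements of one sigma-class with the same range idempotent
   coincide, so every [a] in [D_x] determines its representative [s] in [x] through
   [alpha (s s^-1) = a a^-1], and [theta], [w] are well defined.  Any element of [x] lying
   above that representative gives the same values, because Sieben's conditions make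
   [lam (s e)] and [f (s e) t] agree with [lam s] and [f s (e t)] for idempotent [e].  The
   axioms of the twisted partial action are then the module axioms (iii) and (v) evaluated
   at these representatives, and [a delta_s |-> a delta_(sigma s)] is an isomorphism of the
   crossed products because [s] is recovered from [sigma s] and [alpha (s s^-1) = a a^-1]. *)

From Stdlib Require Import FunctionalExtensionality PropExtensionality ProofIrrelevance
  IndefiniteDescription.
Local Open Scope isg_scope.
Set Implicit Arguments.
Unset Strict Implicit.

Tactic Notation "regroup" constr(X) := transitivity X; [rewrite ?is_assoc; reflexivity|].

Section InverseSemigroup.
Variable T : InvSemigroup.
Implicit Types a b e g h s t u : T.

Lemma inv_l a : a ** a^-1 ** a = a. Proof. exact (is_inv_l a). Qed.
Lemma inv_r a : a^-1 ** a ** a^-1 = a^-1. Proof. exact (is_inv_r a). Qed.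

Lemma invK a : (a^-1)^-1 = a.
Proof. symmetry; apply is_inv_uniq; [apply inv_r | apply inv_l]. Qed.

Lemma idem_invE e : idem e -> e^-1 = e.
Proof. intro he; symmetry; apply is_inv_uniq; unfold idem in he; rewrite !he; auto. Qed.

Lemma idem_mulVE e : idem e -> e ** e^-1 = e.
Proof. intro he; rewrite (idem_invE he); exact he. Qed.

Lemma idem_mulV a : idem (a ** a^-1).
Proof. unfold idem; rewrite is_assoc, inv_l; reflexivity. Qed.

Lemma idem_Vmul a : idem (a^-1 ** a).
Proof. unfold idem; rewrite is_assoc, inv_r; reflexivity. Qed.

(* The inverse x of e g satisfies g x e = x, which forces x, hence e g, to be idempotent. *)
Lemma idem_mul e g : idem e -> idem g -> idem (e ** g).
Proof.
  intros he hg; set (x := (e ** g)^-1).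
  assert (hx : g ** x ** e = x).
  { unfold x; apply is_inv_uniq.
    - regroup (e ** (g ** g) ** (e ** g)^-1 ** (e ** e) ** g).
      rewrite hg, he; regroup ((e ** g) ** (e ** g)^-1 ** (e ** g)); apply inv_l.
    - regroup (g ** ((e ** g)^-1 ** (e ** e) ** (g ** g) ** (e ** g)^-1) ** e).
      rewrite he, hg; regroup (g ** ((e ** g)^-1 ** (e ** g) ** (e ** g)^-1) ** e).
      rewrite inv_r; reflexivity. }
  assert (ix : idem x).
  { unfold idem; transitivity ((g ** x ** e) ** (g ** x ** e)); [rewrite hx; reflexivity|].
    regroup (g ** (x ** (e ** g) ** x) ** e); unfold x at 1 2 3; rewrite inv_r; exact hx. }
  unfold idem; rewrite <- (invK (e ** g)); fold x; rewrite (idem_invE ix); exact ix.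
Qed.

Lemma idem_comm e g : idem e -> idem g -> e ** g = g ** e.
Proof.
  intros he hg.
  assert (heg := idem_mul he hg); assert (hge := idem_mul hg he).
  rewrite <- (idem_invE heg); symmetry; apply is_inv_uniq; unfold idem in *.
  - regroup (e ** (g ** g) ** (e ** e) ** g); rewrite hg, he.
    regroup ((e ** g) ** (e ** g)); exact heg.
  - regroup (g ** (e ** e) ** (g ** g) ** e); rewrite hg, he.
    regroup ((g ** e) ** (g ** e)); exact hge.
Qed.

Lemma invM a b : (a ** b)^-1 = b^-1 ** a^-1.
Proof.
  symmetry; apply is_inv_uniq.
  - regroup (a ** ((b ** b^-1) ** (a^-1 ** a)) ** b).
    rewrite (idem_comm (idem_mulV b) (idem_Vmul a)).
    regroup ((a ** a^-1 ** a) ** (b ** b^-1 ** b)); rewrite !inv_l; reflexivity.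
  - regroup (b^-1 ** ((a^-1 ** a) ** (b ** b^-1)) ** a^-1).
    rewrite (idem_comm (idem_Vmul a) (idem_mulV b)).
    regroup ((b^-1 ** b ** b^-1) ** (a^-1 ** a ** a^-1)); rewrite !inv_r; reflexivity.
Qed.

Lemma endo_inv (phi : T -> T) a : endo phi -> phi (a^-1) = (phi a)^-1.
Proof. intro h; apply is_inv_uniq; rewrite <- !h; [rewrite inv_l | rewrite inv_r]; auto. Qed.

Lemma conj_idem_mulr a e : idem e -> a ** e ** a^-1 ** a = a ** e.
Proof.
  intro he; regroup (a ** (e ** (a^-1 ** a))).
  rewrite (idem_comm he (idem_Vmul a)); regroup (a ** a^-1 ** a ** e); rewrite inv_l; reflexivity.
Qed.

Lemma idem_conj a e : idem e -> idem (a ** e ** a^-1).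
Proof.
  intro he; unfold idem; regroup ((a ** e ** a^-1 ** a) ** e ** a^-1).
  rewrite conj_idem_mulr by exact he; regroup (a ** (e ** e) ** a^-1); rewrite he; reflexivity.
Qed.

Lemma idem_conjV a e : idem e -> idem (a^-1 ** e ** a).
Proof. intro he; pose proof (idem_conj a^-1 he) as h; rewrite invK in h; exact h. Qed.

Lemma conj_mulV s : s ** (s^-1 ** s) ** s^-1 = s ** s^-1.
Proof. regroup (s ** s^-1 ** s ** s^-1); rewrite inv_l; reflexivity. Qed.

Lemma conj_Vmul s : s^-1 ** (s ** s^-1) ** s = s^-1 ** s.
Proof. regroup (s^-1 ** s ** s^-1 ** s); rewrite inv_r; reflexivity. Qed.

Lemma mulV_mul s t : (s ** t) ** (s ** t)^-1 = s ** (t ** t^-1) ** s^-1.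
Proof. rewrite invM; rewrite ?is_assoc; reflexivity. Qed.

Lemma mulV_mul_idem t g : idem g -> (t ** g) ** (t ** g)^-1 = t ** g ** t^-1.
Proof. intro hg; rewrite mulV_mul, (idem_mulVE hg); reflexivity. Qed.

Lemma mulV_idem_mul h t : idem h -> (h ** t) ** (h ** t)^-1 = h ** (t ** t^-1).
Proof.
  intro hh; rewrite mulV_mul, (idem_invE hh), <- is_assoc.
  rewrite (idem_comm (idem_mulV t) hh); regroup ((h ** h) ** (t ** t^-1)); rewrite hh; reflexivity.
Qed.

Lemma Vmul_mul_idem t g : idem g -> (t ** g)^-1 ** (t ** g) = (t^-1 ** t) ** g.
Proof.
  intro hg; rewrite invM, (idem_invE hg); regroup (g ** (t^-1 ** t) ** g).
  rewrite (idem_comm hg (idem_Vmul t)); regroup ((t^-1 ** t) ** (g ** g)); rewrite hg; reflexivity.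
Qed.

Lemma mulV_mul_dom p u : u ** u^-1 = p^-1 ** p -> (p ** u) ** (p ** u)^-1 = p ** p^-1.
Proof. intro e; rewrite mulV_mul, e; apply conj_mulV. Qed.

Lemma mul_Vmul_eq s t : s ** s^-1 = t ** t^-1 -> s ** (s^-1 ** t) = t.
Proof. intro e; rewrite is_assoc, e, inv_l; reflexivity. Qed.

Lemma conj_idem_mulV t g : idem g -> (t ** g ** t^-1) ** (t ** t^-1) = t ** g ** t^-1.
Proof. intro hg; rewrite is_assoc, conj_idem_mulr by exact hg; reflexivity. Qed.

Lemma mulV_mul_le t u : ((t ** u) ** (t ** u)^-1) ** (t ** t^-1) = (t ** u) ** (t ** u)^-1.
Proof.
  rewrite invM; regroup (t ** (u ** u^-1) ** (t^-1 ** t ** t^-1)).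
  rewrite inv_r; rewrite ?is_assoc; reflexivity.
Qed.

End InverseSemigroup.

Section GroupFacts.
Variable G : Group.
Implicit Types a b c : G.

Lemma g_cancel_l a b c : g_mul a b = g_mul a c -> b = c.
Proof.
  intro h; rewrite <- (g_mul1l b), <- (g_mul1l c), <- (g_mulVl a), <- !g_assoc, h; reflexivity.
Qed.

Lemma g_idem a : g_mul a a = a -> a = g_one.
Proof. intro h; apply (g_cancel_l (a := a)); rewrite g_mul1r; exact h. Qed.

Lemma g_inv_uniq a b : g_mul a b = g_one -> b = g_inv a.
Proof. intro h; apply (g_cancel_l (a := a)); rewrite h, g_mulVr; reflexivity. Qed.

Lemma g_inv_mul a b : g_inv (g_mul a b) = g_mul (g_inv b) (g_inv a).
Proof.
  symmetry; apply g_inv_uniq.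
  rewrite g_assoc, <- (g_assoc a b), g_mulVr, g_mul1r, g_mulVr; reflexivity.
Qed.

Lemma g_inv_one : g_inv (@g_one G) = g_one.
Proof. symmetry; apply g_inv_uniq, g_mul1l. Qed.

Lemma g_inv_inv a : g_inv (g_inv a) = a.
Proof. symmetry; apply g_inv_uniq, g_mulVl. Qed.

End GroupFacts.

Lemma hom_idem (S : InvSemigroup) (K : Group) (p : S -> K) e :
  hom_to_group p -> idem e -> p e = g_one.
Proof. intros h he; apply g_idem; rewrite <- h, he; reflexivity. Qed.

Lemma hom_inv (S : InvSemigroup) (K : Group) (p : S -> K) s :
  hom_to_group p -> p (s^-1) = g_inv (p s).
Proof. intro h; apply g_inv_uniq; rewrite <- h; apply hom_idem; [exact h | apply idem_mulV]. Qed.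

Section SemilatticeOfGroups.
Variable A : InvSemigroup.
Hypothesis hA : semilattice_of_groups A.
Implicit Types a b c e g : A.

Lemma mulV_Vmul a : a ** a^-1 = a^-1 ** a.
Proof.
  assert (h1 : a^-1 ** a = (a ** a^-1) ** (a^-1 ** a)).
  { symmetry; regroup ((a ** a^-1) ** a^-1 ** a); rewrite (hA a^-1 (idem_mulV a)).
    regroup (a^-1 ** a ** a^-1 ** a); rewrite inv_r; reflexivity. }
  assert (h2 : a ** a^-1 = (a^-1 ** a) ** (a ** a^-1)).
  { symmetry; regroup ((a^-1 ** a) ** a ** a^-1); rewrite (hA a (idem_Vmul a)).
    regroup (a ** a^-1 ** a ** a^-1); rewrite inv_l; reflexivity. }
  rewrite h2 at 1; rewrite (idem_comm (idem_Vmul a) (idem_mulV a)); symmetry; exact h1.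
Qed.

Lemma in_AeE g a : in_Ae g a <-> a ** a^-1 = g.
Proof. unfold in_Ae; rewrite <- mulV_Vmul; tauto. Qed.

Lemma mul_mulV a : a ** (a ** a^-1) = a.
Proof. rewrite <- (hA a (idem_mulV a)); apply inv_l. Qed.

Lemma mulVM a b : (a ** b) ** (a ** b)^-1 = (a ** a^-1) ** (b ** b^-1).
Proof. rewrite mulV_mul, <- is_assoc, (hA a^-1 (idem_mulV b)); rewrite ?is_assoc; reflexivity. Qed.

Lemma mulV_inv a : a^-1 ** (a^-1)^-1 = a ** a^-1.
Proof. rewrite invK; symmetry; apply mulV_Vmul. Qed.

Lemma mulV_comm a b : (a ** a^-1) ** (b ** b^-1) = (b ** b^-1) ** (a ** a^-1).
Proof. apply idem_comm; apply idem_mulV. Qed.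

Lemma mulV_mul_same c a : c ** c^-1 = a ** a^-1 ->
  (c ** a) ** (c ** a)^-1 = a ** a^-1 /\ (a ** c) ** (a ** c)^-1 = a ** a^-1.
Proof. intro h; rewrite !mulVM, h, (idem_mulV a); auto. Qed.

Lemma absorb_idem e b : idem e -> (b ** b^-1) ** e = b ** b^-1 -> e ** b = b /\ b ** e = b.
Proof.
  intros he h.
  assert (heb : e ** b = b).
  { rewrite <- (inv_l b) at 1; regroup (e ** (b ** b^-1) ** b).
    rewrite (hA (b ** b^-1) he), h; apply inv_l. }
  split; [exact heb | rewrite <- hA; auto].
Qed.

Lemma conjVK c a : c ** c^-1 = a ** a^-1 -> c^-1 ** (c ** a ** c^-1) ** c = a.
Proof.
  intro h; regroup ((c^-1 ** c) ** a ** (c^-1 ** c)); rewrite <- mulV_Vmul, h, inv_l.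
  apply mul_mulV.
Qed.

Lemma conjK c a : c ** c^-1 = a ** a^-1 -> c ** (c^-1 ** a ** c) ** c^-1 = a.
Proof. intro h; regroup ((c ** c^-1) ** a ** (c ** c^-1)); rewrite h, inv_l; apply mul_mulV. Qed.

Lemma mulV_conjV c a : c ** c^-1 = a ** a^-1 ->
  (c^-1 ** a ** c) ** (c^-1 ** a ** c)^-1 = a ** a^-1.
Proof. intro h; rewrite !mulVM, mulV_inv, h, (idem_mulV a); apply idem_mulV. Qed.

(* The multipliers [w x y] are of this form, with [F a = f(s, s^-1 t)] for the
   representatives [s], [t] at [a]. *)
Section TwistingMultiplier.
Variable T : A -> Prop.
Hypothesis hT : forall a b, T a -> T (a ** b) /\ T (b ** a).
Variable F : A -> A.
Hypothesis F_ext : forall a b, T a -> T b -> a ** a^-1 = b ** b^-1 -> F a = F b.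
Hypothesis F_mulr : forall a b, T a -> T b -> F (a ** b) = (b ** b^-1) ** F a.

Lemma T_mull a b : T b -> T (a ** b). Proof. intro hb; exact (proj2 (hT a hb)). Qed.
Lemma T_mulr a b : T a -> T (a ** b). Proof. intro ha; exact (proj1 (hT b ha)). Qed.

Lemma F_mull a b : T a -> T b -> F (a ** b) = (a ** a^-1) ** F b.
Proof.
  intros ha hb; rewrite (@F_ext (a ** b) (b ** a)) by
    (auto using T_mulr, T_mull; rewrite !mulVM; apply mulV_comm).
  apply F_mulr; auto.
Qed.

Lemma multiplier_twisting (w : (A -> A) * (A -> A)) :
  (forall a, T a -> fst w a = F a ** a /\ snd w a = a ** F a) -> multiplier T w.
Proof.
  intro hw; split.
  - intros a ha; rewrite (proj1 (hw a ha)), (proj2 (hw a ha)); auto using T_mull, T_mulr.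
  - intros a b ha hb; assert (hab : T (a ** b)) by auto using T_mulr.
    rewrite (proj1 (hw _ hab)), (proj2 (hw _ hab)), (proj1 (hw _ ha)), (proj2 (hw _ ha)),
      (proj1 (hw _ hb)), (proj2 (hw _ hb)).
    split; [|split].
    + rewrite F_mulr by auto; regroup ((b ** b^-1) ** (F a ** a) ** b).
      rewrite (hA (F a ** a) (idem_mulV b)); regroup (F a ** a ** (b ** b^-1 ** b)).
      rewrite inv_l; rewrite ?is_assoc; reflexivity.
    + rewrite F_mull by auto; regroup (a ** (b ** (a ** a^-1)) ** F b).
      rewrite <- (hA b (idem_mulV a)); regroup ((a ** (a ** a^-1)) ** b ** F b).
      rewrite mul_mulV; rewrite ?is_assoc; reflexivity.
    + transitivity (a ** F (a ** b) ** b).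
      { rewrite F_mull by auto; rewrite <- (mul_mulV a) at 1; rewrite ?is_assoc; reflexivity. }
      rewrite F_mulr by auto; regroup (a ** ((b ** b^-1) ** F a) ** b).
      rewrite (hA (F a) (idem_mulV b)); regroup (a ** F a ** (b ** b^-1 ** b)).
      rewrite inv_l; rewrite ?is_assoc; reflexivity.
Qed.

End TwistingMultiplier.

Section TwistingMultiplierUnit.
Variable T : A -> Prop.
Hypothesis hT : forall a b, T a -> T (a ** b) /\ T (b ** a).
Variable F : A -> A.
Hypothesis F_mulV : forall a, T a -> F a ** (F a)^-1 = a ** a^-1.
Hypothesis F_ext : forall a b, T a -> T b -> a ** a^-1 = b ** b^-1 -> F a = F b.
Hypothesis F_mulr : forall a b, T a -> T b -> F (a ** b) = (b ** b^-1) ** F a.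
Variable w : (A -> A) * (A -> A).
Hypothesis w_twisting : forall a, T a -> fst w a = F a ** a /\ snd w a = a ** F a.

Definition twisting_inverse : (A -> A) * (A -> A) :=
  (fun a => (F a)^-1 ** a, fun a => a ** (F a)^-1).

Let FV_mul a : T a -> (F a)^-1 ** F a = a ** a^-1.
Proof. intro ha; rewrite <- mulV_Vmul; auto. Qed.

Let F_mulV_ext a : T a -> F ((F a)^-1 ** a) = F a /\ F (a ** (F a)^-1) = F a /\
  F (F a ** a) = F a /\ F (a ** F a) = F a.
Proof.
  intro ha.
  assert (FV_mulV : (F a)^-1 ** (F a)^-1^-1 = a ** a^-1) by (rewrite mulV_inv; auto).
  destruct (mulV_mul_same FV_mulV) as [e1 e2]; destruct (mulV_mul_same (F_mulV ha)) as [e3 e4].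
  pose proof (T_mull hT) as Tl; pose proof (T_mulr hT) as Tr.
  repeat split; apply F_ext; auto.
Qed.

Lemma mult_inverse_twisting : mult_inverse T w twisting_inverse.
Proof.
  split; [|split].
  - exact (multiplier_twisting hT F_ext F_mulr w_twisting).
  - apply (@multiplier_twisting T hT (fun a => (F a)^-1)); simpl; auto.
    + intros a b ha hb e; rewrite (F_ext ha hb e); reflexivity.
    + intros a b ha hb; rewrite (F_mulr ha hb), invM, (idem_invE (idem_mulV b)).
      symmetry; apply hA, idem_mulV.
  - intros a ha; simpl.
    destruct (F_mulV_ext ha) as [e1 [e2 [e3 e4]]].
    rewrite (proj1 (w_twisting (T_mull hT _ ha))), (proj2 (w_twisting (T_mulr hT _ ha))),
      (proj1 (w_twisting ha)), (proj2 (w_twisting ha)), e1, e2, e3, e4.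
    repeat split.
    + rewrite is_assoc, (F_mulV ha); apply inv_l.
    + rewrite is_assoc, (FV_mul ha); apply inv_l.
    + rewrite <- is_assoc, (FV_mul ha); apply mul_mulV.
    + rewrite <- is_assoc, (F_mulV ha); apply mul_mulV.
Qed.

Lemma mult_inverse_twisting_snd w' :
  mult_inverse T w w' -> forall a, T a -> snd w' a = a ** (F a)^-1.
Proof.
  intros [_ [_ hw']] a ha.
  assert (k : snd w (a ** (F a)^-1) = a).
  { rewrite (proj2 (w_twisting (T_mulr hT _ ha))), (proj1 (proj2 (F_mulV_ext ha))), <- is_assoc,
      (FV_mul ha).
    apply mul_mulV. }
  rewrite <- k at 1; apply (hw' _ (T_mulr hT _ ha)).
Qed.

End TwistingMultiplierUnit.

End SemilatticeOfGroups.

Section MinimumGroupCongruence.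
Variable S : InvSemigroup.
Implicit Types s t u e g : S.

Definition sigma_rel s t := exists e, idem e /\ e ** s = e ** t.

Lemma sigma_refl s : sigma_rel s s.
Proof. exists (s ** s^-1); split; [apply idem_mulV | reflexivity]. Qed.

Lemma sigma_sym s t : sigma_rel s t -> sigma_rel t s.
Proof. intros [e [he h]]; exists e; auto. Qed.

Lemma sigma_trans s t u : sigma_rel s t -> sigma_rel t u -> sigma_rel s u.
Proof.
  intros [e [he h1]] [g [hg h2]]; exists (g ** e); split; [apply idem_mul; auto|].
  rewrite <- !is_assoc, h1, !is_assoc, (idem_comm hg he), <- !is_assoc, h2; reflexivity.
Qed.

Lemma sigma_mulr s t u : sigma_rel s t -> sigma_rel (s ** u) (t ** u).
Proof. intros [e [he h]]; exists e; split; auto; rewrite !is_assoc, h; reflexivity. Qed.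

Lemma sigma_mull s t u : sigma_rel s t -> sigma_rel (u ** s) (u ** t).
Proof.
  intros [e [he h]]; exists (u ** e ** u^-1); split; [apply idem_conj; auto|].
  rewrite !is_assoc, !conj_idem_mulr by auto; rewrite <- !is_assoc, h; reflexivity.
Qed.

Lemma sigma_idem e g : idem e -> idem g -> sigma_rel e g.
Proof.
  intros he hg; exists (e ** g); split; [apply idem_mul; auto|].
  unfold idem in *; regroup (e ** (g ** e)); rewrite (idem_comm hg he).
  regroup ((e ** e) ** g); rewrite he, <- is_assoc, hg; reflexivity.
Qed.

(* Classes are predicates [sigma_rel s]; comparing them needs extensionality and proof
   irrelevance. *)
Definition sigma_class := {P : S -> Prop | exists s, P = sigma_rel s}.

Definition cls s : sigma_class := exist _ (sigma_rel s) (ex_intro _ s eq_refl).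

Lemma cls_eq s t : cls s = cls t <-> sigma_rel s t.
Proof.
  split.
  - intro h; apply (f_equal (@proj1_sig _ _)) in h; simpl in h; rewrite h; apply sigma_refl.
  - intro h; apply eq_sig_hprop; [intros; apply proof_irrelevance|].
    apply functional_extensionality; intro u; apply propositional_extensionality.
    split; intro k; [apply sigma_trans with s | apply sigma_trans with t]; auto using sigma_sym.
Qed.

Lemma cls_surj (P : sigma_class) : exists s, P = cls s.
Proof.
  destruct P as [P [s e]]; exists s; apply eq_sig_hprop; [intros; apply proof_irrelevance|].
  exact e.
Qed.

Definition cls_rep (P : sigma_class) : S :=
  proj1_sig (constructive_indefinite_description _ (cls_surj P)).

Lemma cls_repK P : cls (cls_rep P) = P.
Proof.
  unfold cls_rep; destruct (constructive_indefinite_description _ (cls_surj P)); auto.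
Qed.

Definition cls_mul (P Q : sigma_class) : sigma_class := cls (cls_rep P ** cls_rep Q).
Definition cls_inv (P : sigma_class) : sigma_class := cls ((cls_rep P)^-1).

Variable s0 : S.
Definition cls_one : sigma_class := cls (s0 ** s0^-1).

Lemma cls_mulE s t : cls_mul (cls s) (cls t) = cls (s ** t).
Proof.
  unfold cls_mul; apply cls_eq.
  assert (h1 : sigma_rel (cls_rep (cls s)) s) by (apply cls_eq, cls_repK).
  assert (h2 : sigma_rel (cls_rep (cls t)) t) by (apply cls_eq, cls_repK).
  eauto using sigma_trans, sigma_mulr, sigma_mull.
Qed.

Lemma cls_mulA P Q R : cls_mul P (cls_mul Q R) = cls_mul (cls_mul P Q) R.
Proof.
  destruct (cls_surj P) as [x ->], (cls_surj Q) as [y ->], (cls_surj R) as [z ->].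
  rewrite !cls_mulE, is_assoc; reflexivity.
Qed.

Lemma cls_mul1l P : cls_mul cls_one P = P.
Proof.
  destruct (cls_surj P) as [x ->]; unfold cls_one; rewrite cls_mulE; apply cls_eq.
  exists (s0 ** s0^-1); split; [apply idem_mulV|].
  rewrite is_assoc, (idem_mulV s0); reflexivity.
Qed.

Lemma cls_mul1r P : cls_mul P cls_one = P.
Proof.
  destruct (cls_surj P) as [x ->]; unfold cls_one; rewrite cls_mulE; apply cls_eq.
  assert (he := idem_mulV s0).
  exists (x ** (s0 ** s0^-1) ** x^-1); split; [apply idem_conj; auto|].
  rewrite is_assoc, !conj_idem_mulr, <- is_assoc, he by auto; reflexivity.
Qed.

Lemma cls_mulVl P : cls_mul (cls_inv P) P = cls_one.
Proof.
  unfold cls_inv; rewrite <- (cls_repK P) at 2; rewrite cls_mulE; apply cls_eq.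
  apply sigma_idem; [apply idem_Vmul | apply idem_mulV].
Qed.

Lemma cls_mulVr P : cls_mul P (cls_inv P) = cls_one.
Proof.
  unfold cls_inv; rewrite <- (cls_repK P) at 1; rewrite cls_mulE; apply cls_eq.
  apply sigma_idem; apply idem_mulV.
Qed.

Definition sigma_group : Group :=
  @Build_Group sigma_class cls_mul cls_one cls_inv
    cls_mulA cls_mul1l cls_mul1r cls_mulVl cls_mulVr.

Lemma cls_hom : hom_to_group (K := sigma_group) cls.
Proof. intros s t; symmetry; apply cls_mulE. Qed.

End MinimumGroupCongruence.

Lemma min_group_quotient_sigma (S : InvSemigroup) (H : Group) (q : S -> H) :
  min_group_quotient q -> forall s t, q s = q t -> sigma_rel s t.
Proof.
  intros [_ [q_surj q_min]] s t e; destruct (q_surj g_one) as [s0 _].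
  apply cls_eq; exact (q_min (sigma_group s0) (@cls S) (cls_hom s0) s t e).
Qed.

Section EUnitary.
Variables (S : InvSemigroup) (H : Group) (q : S -> H).
Hypothesis hS : E_unitary S.
Hypothesis hq : min_group_quotient q.
Implicit Types s t e : S.

Lemma q_mul s t : q (s ** t) = g_mul (q s) (q t). Proof. apply (proj1 hq). Qed.
Lemma q_idem e : idem e -> q e = g_one. Proof. apply hom_idem, (proj1 hq). Qed.
Lemma q_inv s : q (s^-1) = g_inv (q s). Proof. apply hom_inv, (proj1 hq). Qed.

Lemma q_idem_mull e s : idem e -> q (e ** s) = q s.
Proof. intro he; rewrite q_mul, (q_idem he), g_mul1l; reflexivity. Qed.

Lemma q_idem_mulr e s : idem e -> q (s ** e) = q s.
Proof. intro he; rewrite q_mul, (q_idem he), g_mul1r; reflexivity. Qed.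

(* [s] is sigma-related to an idempotent, so some [e s] is idempotent and lies below [s]. *)
Lemma idem_of_q_one s : q s = g_one -> idem s.
Proof.
  intro h.
  assert (h2 : q s = q (s ** s^-1)) by (rewrite (q_idem (idem_mulV s)); exact h).
  destruct (min_group_quotient_sigma hq h2) as [e [he E]].
  apply (hS (e := e ** s)); [rewrite E; apply idem_mul; auto using idem_mulV|].
  exists e; auto.
Qed.

Lemma idem_Vmul_q s t : q s = q t -> idem (s^-1 ** t).
Proof. intro h; apply idem_of_q_one; rewrite q_mul, q_inv, h; apply g_mulVl. Qed.

Lemma Vmul_q s t : q s = q t -> s^-1 ** t = (s^-1 ** s) ** (t^-1 ** t).
Proof.
  intro hst; assert (hg : idem (s^-1 ** t)) by (apply idem_Vmul_q; auto).
  assert (hh : idem (s ** t^-1)).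
  { pose proof (@idem_Vmul_q s^-1 t^-1) as k; rewrite !invK in k.
    apply k; rewrite !q_inv, hst; reflexivity. }
  assert (s1 : s^-1 ** t = ((s^-1 ** s) ** (t^-1 ** t)) ** (s^-1 ** t)).
  { transitivity ((s^-1 ** s ** s^-1) ** (t ** t^-1 ** t)); [rewrite inv_r, inv_l; reflexivity|].
    regroup ((s^-1 ** s) ** ((s^-1 ** t) ** (t^-1 ** t))).
    rewrite (idem_comm hg (idem_Vmul t)); rewrite !is_assoc; reflexivity. }
  assert (s2 : (s^-1 ** s) ** (t^-1 ** t) = (s^-1 ** (s ** t^-1) ** s) ** (s^-1 ** t)).
  { regroup ((s^-1 ** (s ** t^-1)) ** t); rewrite <- (conj_idem_mulr s^-1 hh) at 1.
    rewrite invK; rewrite !is_assoc; reflexivity. }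
  rewrite s1, s2 at 1; rewrite <- is_assoc, hg, <- s2; reflexivity.
Qed.

Lemma mulV_q s t : q s = q t -> s ** t^-1 = (s ** s^-1) ** (t ** t^-1).
Proof.
  intro h; pose proof (@Vmul_q s^-1 t^-1) as k; rewrite !invK in k.
  apply k; rewrite !q_inv, h; reflexivity.
Qed.

Lemma q_mulV_inj s t : q s = q t -> s ** s^-1 = t ** t^-1 -> s = t.
Proof.
  intros hst hr.
  assert (k1 : t = s ** (t^-1 ** t)).
  { rewrite <- (inv_l t) at 1; rewrite <- hr; regroup (s ** (s^-1 ** t)).
    rewrite Vmul_q by exact hst; regroup ((s ** s^-1 ** s) ** (t^-1 ** t)); rewrite inv_l; reflexivity. }
  assert (k2 : s = t ** (s^-1 ** s)).
  { rewrite <- (inv_l s) at 1; rewrite hr; regroup (t ** (t^-1 ** s)).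
    rewrite Vmul_q by auto; regroup ((t ** t^-1 ** t) ** (s^-1 ** s)); rewrite inv_l; reflexivity. }
  rewrite k2 at 1; rewrite k1; regroup (s ** ((t^-1 ** t) ** (s^-1 ** s))).
  rewrite (idem_comm (idem_Vmul t) (idem_Vmul s)); regroup ((s ** s^-1 ** s) ** (t^-1 ** t)).
  rewrite inv_l, <- k1; reflexivity.
Qed.

Lemma conj_Vmul_q s t : q s = q t -> t ** (s^-1 ** s) ** t^-1 = (t ** t^-1) ** (s ** s^-1).
Proof.
  intro h; assert (hi : idem (t ** s^-1)) by (rewrite mulV_q by auto; apply idem_mul; apply idem_mulV).
  transitivity ((t ** s^-1) ** (t ** s^-1)^-1); [rewrite invM, invK; rewrite ?is_assoc; reflexivity|].
  rewrite (idem_invE hi), hi; apply mulV_q; auto.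
Qed.

End EUnitary.

Section TwistedModule.
Variables (S A : InvSemigroup) (H : Group) (q : S -> H).
Hypothesis hS : E_unitary S.
Hypothesis hA : semilattice_of_groups A.
Hypothesis hq : min_group_quotient q.
Variables (alpha : S -> A) (lam : S -> A -> A) (f : S -> S -> A).
Hypothesis alpha_idem : forall e, idem e -> idem (alpha e).
Hypothesis alpha_mul : forall e g, idem e -> idem g -> alpha (e ** g) = alpha e ** alpha g.
Hypothesis alpha_inj : forall e g, idem e -> idem g -> alpha e = alpha g -> e = g.
Hypothesis alpha_surj : forall g : A, idem g -> exists e, idem e /\ alpha e = g.
Hypothesis lam_endo : forall s, endo (lam s).
Hypothesis f_in_A : forall s t, in_Ae (alpha (s ** t ** t^-1 ** s^-1)) (f s t).
Hypothesis lam_idem : forall e a, idem e -> lam e a = alpha e ** a.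
Hypothesis lam_alpha : forall s e, idem e -> lam s (alpha e) = alpha (s ** e ** s^-1).
Hypothesis lam_comp : forall s t a, lam s (lam t a) = f s t ** lam (s ** t) a ** (f s t)^-1.
Hypothesis f_cocycle : forall s t u, lam s (f t u) ** f s (t ** u) = f s t ** f (s ** t) u.
Hypothesis f_sieben : forall s e, idem e ->
  f s e = alpha (s ** e ** s^-1) /\ f e s = alpha (e ** s ** s^-1).

Implicit Types s t u e g h : S.
Implicit Types a b c : A.

Notation D := (Dom q alpha).

Lemma alpha_mulV s : idem (alpha (s ** s^-1)). Proof. apply alpha_idem, idem_mulV. Qed.
Lemma alpha_Vmul s : idem (alpha (s^-1 ** s)). Proof. apply alpha_idem, idem_Vmul. Qed.

Lemma alpha_surj_mulV a : exists h, idem h /\ alpha h = a ** a^-1.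
Proof. apply alpha_surj, idem_mulV. Qed.

Lemma alpha_mulV_inj s t : alpha (s ** s^-1) = alpha (t ** t^-1) -> s ** s^-1 = t ** t^-1.
Proof. apply alpha_inj; apply idem_mulV. Qed.

Lemma alpha_le e g : idem e -> idem g -> e ** g = e -> alpha e ** alpha g = alpha e.
Proof. intros he hg k; rewrite <- alpha_mul, k by auto; reflexivity. Qed.

Lemma lam_mulV s a : lam s a ** (lam s a)^-1 = lam s (a ** a^-1).
Proof. rewrite <- (endo_inv _ (lam_endo s)), (lam_endo s); reflexivity. Qed.

Lemma lam_absorb u a :
  alpha (u ** u^-1) ** lam u a = lam u a /\ lam u a ** alpha (u ** u^-1) = lam u a.
Proof.
  apply (absorb_idem hA); [apply alpha_mulV|].
  destruct (alpha_surj_mulV a) as [h [hh e]]; rewrite lam_mulV, <- e, lam_alpha by auto.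
  apply alpha_le; [apply idem_conj; auto | apply idem_mulV | apply conj_idem_mulV; auto].
Qed.

Lemma f_mulV s t : f s t ** (f s t)^-1 = alpha ((s ** t) ** (s ** t)^-1).
Proof. rewrite (proj1 (f_in_A s t)), mulV_mul; rewrite ?is_assoc; reflexivity. Qed.

Lemma f_idem_l e s : idem e -> f e s = alpha (e ** (s ** s^-1)).
Proof. intro he; rewrite (proj2 (f_sieben s he)); rewrite ?is_assoc; reflexivity. Qed.

Lemma lam_mul_idem s g a : idem g -> lam (s ** g) a = lam s (alpha g ** a).
Proof.
  intro hg; rewrite <- (lam_idem a hg), lam_comp, (proj1 (f_sieben s hg)).
  rewrite (idem_invE (alpha_idem (idem_conj s hg))).
  pose proof (lam_absorb (s ** g) a) as [k1 k2]; rewrite (mulV_mul_idem s hg) in k1, k2.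
  rewrite k1; symmetry; exact k2.
Qed.

Lemma DomE x a : D x a <-> exists s, q s = x /\ alpha (s ** s^-1) = a ** a^-1.
Proof.
  unfold Dom; split; intros [s [k1 k2]]; exists s; split; auto.
  - symmetry; apply (in_AeE hA), k2.
  - apply (in_AeE hA); symmetry; exact k2.
Qed.

Lemma Dom_invE x a : D (g_inv x) a <-> exists s, q s = x /\ alpha (s^-1 ** s) = a ** a^-1.
Proof.
  rewrite DomE; split; intros [s [k1 k2]]; exists s^-1.
  - rewrite (q_inv hq), k1, g_inv_inv, invK; auto.
  - rewrite (q_inv hq), k1, invK; auto.
Qed.

Lemma Dom_ideal x a b : D x a -> D x (a ** b) /\ D x (b ** a).
Proof.
  rewrite !DomE; intros [s [k1 k2]]; destruct (alpha_surj_mulV b) as [h [hh e]].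
  split; exists (h ** s); rewrite (q_idem_mull hq _ hh), mulV_idem_mul, alpha_mul, e, k2, !(mulVM hA)
    by (auto; apply idem_mulV); auto using mulV_comm.
Qed.

Lemma Dom_nonempty x : exists a, D x a.
Proof.
  destruct (proj1 (proj2 hq) x) as [s k]; exists (alpha (s ** s^-1)).
  apply DomE; exists s; rewrite (idem_mulVE (alpha_mulV s)); auto.
Qed.

Lemma Dom_one a : D g_one a.
Proof.
  apply DomE; destruct (alpha_surj_mulV a) as [h [hh e]]; exists h.
  rewrite (q_idem hq hh), idem_mulVE; auto.
Qed.

Lemma setmul_DomE x y a : setmul (D x) (D y) a <-> D x a /\ D y a.
Proof.
  split.
  - intros [b [c [hb [hc ->]]]]; split; [apply (Dom_ideal c hb) | apply (Dom_ideal b hc)].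
  - intros [k1 k2]; exists a, (a^-1 ** a); repeat split; auto.
    + apply (Dom_ideal a^-1 k2).
    + rewrite is_assoc, inv_l; reflexivity.
Qed.

Lemma setmul_Dom x y a : D x a -> D y a -> setmul (D x) (D y) a.
Proof. intros; apply setmul_DomE; auto. Qed.

Lemma setmul_Dom_ideal x y a b :
  setmul (D x) (D y) a -> setmul (D x) (D y) (a ** b) /\ setmul (D x) (D y) (b ** a).
Proof.
  rewrite !setmul_DomE; intros [u v].
  pose proof (Dom_ideal b u); pose proof (Dom_ideal b v); tauto.
Qed.

Lemma f_idem_mid s g u : idem g -> f s (g ** u) = f (s ** g) u.
Proof.
  intro hg; pose proof (f_cocycle s g u) as k.
  assert (hk : idem (g ** (u ** u^-1))) by (apply idem_mul; auto using idem_mulV).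
  rewrite (f_idem_l _ hg), (proj1 (f_sieben s hg)), lam_alpha in k by auto.
  assert (A1 : alpha (s ** (g ** (u ** u^-1)) ** s^-1) ** f s (g ** u) = f s (g ** u)).
  { apply (absorb_idem hA); [apply alpha_idem, idem_conj, hk|].
    rewrite f_mulV, mulV_mul, mulV_idem_mul by exact hg; apply alpha_idem, idem_conj, hk. }
  assert (A2 : alpha (s ** g ** s^-1) ** f (s ** g) u = f (s ** g) u).
  { apply (absorb_idem hA); [apply alpha_idem, idem_conj; auto|].
    assert (eq2 : s ** g ** (u ** u^-1) ** (s ** g)^-1 = s ** (g ** (u ** u^-1)) ** s^-1).
    { rewrite invM, (idem_invE hg); regroup (s ** (g ** ((u ** u^-1) ** g)) ** s^-1).
      rewrite (idem_comm (idem_mulV u) hg); regroup (s ** ((g ** g) ** (u ** u^-1)) ** s^-1).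
      rewrite hg; reflexivity. }
    rewrite f_mulV, mulV_mul, eq2; apply alpha_le; [apply idem_conj; auto | apply idem_conj; auto|].
    regroup ((s ** (g ** (u ** u^-1)) ** s^-1 ** s) ** g ** s^-1); rewrite (conj_idem_mulr s hk).
    regroup (s ** ((g ** (u ** u^-1)) ** g) ** s^-1).
    rewrite <- (idem_comm hg hk); regroup (s ** ((g ** g) ** (u ** u^-1)) ** s^-1).
    rewrite hg; reflexivity. }
  rewrite A1, A2 in k; exact k.
Qed.

Lemma f_idem_mull h t u : idem h -> f (h ** t) u = alpha h ** f t u.
Proof.
  intro hh; pose proof (f_cocycle h t u) as k.
  rewrite lam_idem, (f_idem_l _ hh), (f_idem_l _ hh) in k by auto.
  rewrite (alpha_mul hh (idem_mulV (t ** u))), (alpha_mul hh (idem_mulV t)) in k.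
  assert (B1 : f t u ** alpha ((t ** u) ** (t ** u)^-1) = f t u)
    by (rewrite <- f_mulV; apply (mul_mulV hA)).
  assert (B2 : alpha h ** alpha (t ** t^-1) ** f (h ** t) u = f (h ** t) u).
  { rewrite <- alpha_mul by (auto; apply idem_mulV).
    apply (absorb_idem hA); [apply alpha_idem, idem_mul; auto using idem_mulV|].
    rewrite f_mulV, <- (is_assoc h t u), (mulV_idem_mul (t ** u) hh).
    apply alpha_le; try (apply idem_mul; [auto | apply idem_mulV]).
    regroup (h ** (((t ** u) ** (t ** u)^-1) ** h) ** (t ** t^-1)).
    rewrite (idem_comm (idem_mulV (t ** u)) hh).
    regroup ((h ** h) ** (((t ** u) ** (t ** u)^-1) ** (t ** t^-1))).
    rewrite hh, mulV_mul_le; reflexivity. }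
  rewrite B2 in k; rewrite <- k.
  regroup (alpha h ** (f t u ** alpha h) ** alpha ((t ** u) ** (t ** u)^-1)).
  rewrite <- (hA (f t u) (alpha_idem hh)).
  regroup ((alpha h ** alpha h) ** (f t u ** alpha ((t ** u) ** (t ** u)^-1))).
  rewrite B1, (alpha_idem hh); reflexivity.
Qed.

Variable theta : H -> A -> A.
Hypothesis htheta : forall x a, D (g_inv x) a ->
  forall s, q s = x -> alpha (s^-1 ** s) = a ** a^-1 -> theta x a = lam s a.

(* Any [s] in [x] whose domain idempotent lies above that of [a] computes [theta x a]:
   by Sieben's condition [lam (s h) = lam s] on elements of [A_(alpha h)]. *)
Lemma theta_lam x s a : q s = x -> (a ** a^-1) ** alpha (s^-1 ** s) = a ** a^-1 ->
  theta x a = lam s a.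
Proof.
  intros k1 k2; destruct (alpha_surj_mulV a) as [h [hh e]].
  assert (d1 : alpha ((s ** h)^-1 ** (s ** h)) = a ** a^-1).
  { rewrite Vmul_mul_idem, alpha_mul, e by (auto; apply idem_Vmul).
    rewrite <- k2 at 2; apply idem_comm; [apply alpha_Vmul | apply idem_mulV]. }
  assert (q1 : q (s ** h) = x) by (rewrite (q_idem_mulr hq _ hh); exact k1).
  assert (hD : D (g_inv x) a) by (apply Dom_invE; exists (s ** h); auto).
  rewrite (htheta hD q1 d1), lam_mul_idem, e, inv_l by exact hh; reflexivity.
Qed.

Lemma theta_rep x a : D (g_inv x) a -> exists s, q s = x /\ alpha (s^-1 ** s) = a ** a^-1 /\
  theta x a = lam s a /\ theta x a ** (theta x a)^-1 = alpha (s ** s^-1).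
Proof.
  intro ha; destruct (proj1 (Dom_invE x a) ha) as [s [k1 k2]]; exists s.
  assert (t1 : theta x a = lam s a) by (apply htheta; auto).
  repeat split; auto.
  rewrite t1, lam_mulV, <- k2, lam_alpha, conj_mulV by apply idem_Vmul; reflexivity.
Qed.

Lemma theta_Dom x a : D (g_inv x) a -> D x (theta x a).
Proof. intro ha; destruct (theta_rep ha) as [s [k1 [_ [_ k4]]]]; apply DomE; exists s; auto. Qed.

Lemma theta_inj x a b : D (g_inv x) a -> D (g_inv x) b -> theta x a = theta x b -> a = b.
Proof.
  intros ha hb e.
  destruct (theta_rep ha) as [s [k1 [k2 [k3 k4]]]], (theta_rep hb) as [t [l1 [l2 [l3 l4]]]].
  assert (st : s = t) by (apply (q_mulV_inj hS hq); [congruence | apply alpha_mulV_inj; congruence]).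
  subst t; rewrite k3, l3 in e.
  assert (e2 := f_equal (lam s^-1) e).
  rewrite !lam_comp, !lam_idem in e2 by apply idem_Vmul.
  rewrite k2 in e2 at 1; rewrite l2, !inv_l in e2.
  assert (ef : f s^-1 s ** (f s^-1 s)^-1 = alpha (s^-1 ** s))
    by (rewrite f_mulV, (idem_mulVE (idem_Vmul s)); reflexivity).
  rewrite <- (conjVK hA (c := f s^-1 s) (a := a)), <- (conjVK hA (c := f s^-1 s) (a := b)), e2;
    congruence.
Qed.

Lemma theta_surj x b : D x b -> exists a, D (g_inv x) a /\ theta x a = b.
Proof.
  intro hb; destruct (proj1 (DomE x b) hb) as [s [k1 k2]].
  set (c := f s s^-1).
  assert (ec : c ** c^-1 = b ** b^-1)
    by (unfold c; rewrite f_mulV, (idem_mulVE (idem_mulV s)); auto).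
  set (y := c^-1 ** b ** c).
  assert (ey : y ** y^-1 = b ** b^-1) by (apply (mulV_conjV hA); auto).
  exists (lam s^-1 y).
  assert (ea : lam s^-1 y ** (lam s^-1 y)^-1 = alpha (s^-1 ** s)).
  { rewrite lam_mulV, ey, <- k2, lam_alpha, invK, conj_Vmul by apply idem_mulV; reflexivity. }
  split; [apply Dom_invE; exists s; auto|].
  rewrite (theta_lam (s := s)), lam_comp, lam_idem by (auto using idem_mulV; rewrite ea; apply alpha_Vmul).
  fold c; rewrite k2, <- ey, inv_l; apply (conjK hA); auto.
Qed.

Lemma lam_theta x s c : q s = x -> D (g_inv x) c -> lam s c = alpha (s ** s^-1) ** theta x c.
Proof.
  intros k hc; destruct (theta_rep hc) as [t [l1 [l2 [l3 l4]]]].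
  set (c' := alpha (s^-1 ** s) ** c).
  assert (ec' : c' ** c'^-1 = alpha (s^-1 ** s) ** (c ** c^-1))
    by (unfold c'; rewrite (mulVM hA), (idem_mulVE (alpha_Vmul s)); reflexivity).
  assert (e1 : lam s c' = lam s c).
  { unfold c'; rewrite (lam_endo s), lam_alpha, conj_mulV by apply idem_Vmul; apply lam_absorb. }
  assert (e2 : theta x c' = lam s c').
  { apply theta_lam; auto; rewrite ec'.
    regroup (alpha (s^-1 ** s) ** ((c ** c^-1) ** alpha (s^-1 ** s))).
    rewrite (idem_comm (idem_mulV c) (alpha_Vmul s)).
    regroup ((alpha (s^-1 ** s) ** alpha (s^-1 ** s)) ** (c ** c^-1)).
    rewrite (alpha_Vmul s); reflexivity. }
  assert (e3 : theta x c' = lam t c').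
  { apply theta_lam; auto; rewrite ec', <- l2, <- is_assoc, (alpha_Vmul t); reflexivity. }
  rewrite <- e1, <- e2, e3; unfold c'; rewrite (lam_endo t), lam_alpha by apply idem_Vmul.
  rewrite (conj_Vmul_q hS hq (s := s) (t := t)), alpha_mul, <- l3 by (congruence || apply idem_mulV).
  rewrite (idem_comm (alpha_mulV t) (alpha_mulV s)), <- is_assoc, <- l4, inv_l; reflexivity.
Qed.

Lemma theta_mul x a b : D (g_inv x) a -> D (g_inv x) b ->
  theta x (a ** b) = theta x a ** theta x b.
Proof.
  intros ha hb; destruct (theta_rep ha) as [s [k1 [k2 [k3 k4]]]].
  rewrite (theta_lam (s := s) (a := a ** b)); auto.
  - rewrite (lam_endo s), (lam_theta k1 hb), <- k3, is_assoc, <- k4, (mul_mulV hA); reflexivity.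
  - rewrite (mulVM hA), k2; regroup ((a ** a^-1) ** ((b ** b^-1) ** (a ** a^-1))).
    rewrite <- (mulV_comm a b), is_assoc, (idem_mulV a); reflexivity.
Qed.

Lemma theta_one a : theta g_one a = a.
Proof.
  destruct (alpha_surj_mulV a) as [h [hh e]].
  rewrite (theta_lam (s := h)), lam_idem, e by
    (exact (q_idem hq hh) || exact hh || (rewrite (idem_invE hh), hh, e; apply idem_mulV)).
  apply inv_l.
Qed.

Variable w : H -> H -> (A -> A) * (A -> A).
Hypothesis hw : forall x y a, setmul (D x) (D (g_mul x y)) a ->
  forall s t, q s = x -> q t = g_mul x y ->
    alpha (s ** s^-1) = a ** a^-1 -> alpha (t ** t^-1) = a ** a^-1 ->
    fst (w x y) a = f s (s^-1 ** t) ** a /\ snd (w x y) a = a ** f s (s^-1 ** t).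

(* [w x y] multiplies [a] by [f(s, s^-1 t)], which lies in the group of [a]; evaluating at
   the idempotent [a a^-1] returns that factor itself. *)
Definition twist x y a := fst (w x y) (a ** a^-1).

Lemma setmul_rep x y a : setmul (D x) (D (g_mul x y)) a -> exists s t, q s = x /\
  q t = g_mul x y /\ alpha (s ** s^-1) = a ** a^-1 /\ alpha (t ** t^-1) = a ** a^-1.
Proof.
  intro hT; apply setmul_DomE in hT; destruct hT as [k1 k2].
  apply DomE in k1, k2; destruct k1 as [s [l1 l2]], k2 as [t [m1 m2]]; exists s, t; auto.
Qed.

Lemma twistE x y a s t : setmul (D x) (D (g_mul x y)) a -> q s = x -> q t = g_mul x y ->
  alpha (s ** s^-1) = a ** a^-1 -> alpha (t ** t^-1) = a ** a^-1 ->
  twist x y a = f s (s^-1 ** t).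
Proof.
  intros hT k1 k2 k3 k4.
  assert (hT' := proj1 (setmul_Dom_ideal a^-1 hT)).
  assert (e1 : (a ** a^-1) ** (a ** a^-1)^-1 = a ** a^-1) by apply (idem_mulVE (idem_mulV a)).
  assert (ef : f s (s^-1 ** t) ** (f s (s^-1 ** t))^-1 = a ** a^-1)
    by (rewrite f_mulV, mul_Vmul_eq, k4 by (apply alpha_mulV_inj; congruence); reflexivity).
  unfold twist; rewrite (proj1 (hw hT' k1 k2 (eq_trans k3 (eq_sym e1)) (eq_trans k4 (eq_sym e1)))).
  rewrite <- ef; apply (mul_mulV hA).
Qed.

Lemma w_twist x y a : setmul (D x) (D (g_mul x y)) a ->
  fst (w x y) a = twist x y a ** a /\ snd (w x y) a = a ** twist x y a.
Proof.
  intro ha; destruct (setmul_rep ha) as [s [t [k1 [k2 [k3 k4]]]]].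
  rewrite (twistE ha k1 k2 k3 k4); exact (hw ha k1 k2 k3 k4).
Qed.

Lemma twist_mulV x y a : setmul (D x) (D (g_mul x y)) a ->
  twist x y a ** (twist x y a)^-1 = a ** a^-1.
Proof.
  intro ha; destruct (setmul_rep ha) as [s [t [k1 [k2 [k3 k4]]]]].
  rewrite (twistE ha k1 k2 k3 k4), f_mulV, mul_Vmul_eq; auto.
  apply alpha_mulV_inj; congruence.
Qed.

Lemma twist_ext x y a b : a ** a^-1 = b ** b^-1 -> twist x y a = twist x y b.
Proof. intro e; unfold twist; rewrite e; reflexivity. Qed.

Lemma twist_mulr x y a b : setmul (D x) (D (g_mul x y)) a -> setmul (D x) (D (g_mul x y)) b ->
  twist x y (a ** b) = (b ** b^-1) ** twist x y a.
Proof.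
  intros ha hb; destruct (setmul_rep ha) as [s [t [k1 [k2 [k3 k4]]]]].
  destruct (alpha_surj_mulV b) as [h [hh e]].
  assert (hab := proj1 (setmul_Dom_ideal b ha)).
  assert (eab : alpha h ** (a ** a^-1) = (a ** b) ** (a ** b)^-1)
    by (rewrite (mulVM hA), e; apply mulV_comm).
  assert (r1 : alpha ((h ** s) ** (h ** s)^-1) = (a ** b) ** (a ** b)^-1)
    by (rewrite (mulV_idem_mul s hh), (alpha_mul hh (idem_mulV s)), k3; exact eab).
  assert (r2 : alpha ((h ** t) ** (h ** t)^-1) = (a ** b) ** (a ** b)^-1)
    by (rewrite (mulV_idem_mul t hh), (alpha_mul hh (idem_mulV t)), k4; exact eab).
  assert (q1 : q (h ** s) = x) by (rewrite (q_idem_mull hq _ hh); exact k1).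
  assert (q2 : q (h ** t) = g_mul x y) by (rewrite (q_idem_mull hq _ hh); exact k2).
  rewrite (twistE ha k1 k2 k3 k4), (twistE hab q1 q2 r1 r2).
  rewrite <- e, invM, (idem_invE hh).
  assert (e2 : s^-1 ** h ** (h ** t) = (s^-1 ** h ** s) ** (s^-1 ** t)).
  { regroup (s^-1 ** (h ** h) ** t); rewrite hh.
    pose proof (conj_idem_mulr s^-1 hh) as c; rewrite invK in c.
    rewrite <- c at 1; rewrite ?is_assoc; reflexivity. }
  assert (e3 : h ** s ** (s^-1 ** h ** s) = h ** s).
  { regroup (h ** (s ** s^-1 ** h) ** s); rewrite (idem_comm (idem_mulV s) hh).
    regroup ((h ** h) ** (s ** s^-1 ** s)); rewrite hh, inv_l; reflexivity. }
  rewrite e2, f_idem_mid, e3, f_idem_mull by (auto using idem_conjV); reflexivity.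
Qed.

Lemma w_mult_inverse x y :
  mult_inverse (setmul (D x) (D (g_mul x y))) (w x y) (twisting_inverse (twist x y)).
Proof.
  apply (mult_inverse_twisting hA).
  - apply setmul_Dom_ideal.
  - apply twist_mulV.
  - intros a b _ _; apply twist_ext.
  - apply twist_mulr.
  - apply w_twist.
Qed.

Lemma w_inverse_snd x y w' : mult_inverse (setmul (D x) (D (g_mul x y))) (w x y) w' ->
  forall a, setmul (D x) (D (g_mul x y)) a -> snd w' a = a ** (twist x y a)^-1.
Proof.
  apply (mult_inverse_twisting_snd hA).
  - apply setmul_Dom_ideal.
  - apply twist_mulV.
  - intros a b _ _; apply twist_ext.
  - apply w_twist.
Qed.

Lemma theta_setmul x y : set_eq
  (fun b => exists a, setmul (D (g_inv x)) (D y) a /\ theta x a = b)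
  (setmul (D x) (D (g_mul x y))).
Proof.
  intro b; split.
  - intros [a [ha <-]]; apply setmul_DomE in ha; destruct ha as [ha1 ha2].
    destruct (theta_rep ha1) as [s [k1 [k2 [k3 k4]]]].
    destruct (proj1 (DomE y a) ha2) as [u [l1 l2]].
    apply setmul_Dom; [apply theta_Dom; auto|].
    apply DomE; exists (s ** u); split; [rewrite (q_mul hq), k1, l1; reflexivity|].
    rewrite k4, mulV_mul_dom; [reflexivity|].
    apply alpha_inj; [apply idem_mulV | apply idem_Vmul | congruence].
  - intro hb; apply setmul_DomE in hb; destruct hb as [hb1 hb2].
    destruct (theta_surj hb1) as [a [ha e]]; exists a; split; auto.
    apply setmul_Dom; auto.
    destruct (theta_rep ha) as [s [k1 [k2 [k3 k4]]]], (proj1 (DomE _ b) hb2) as [t [l1 l2]].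
    assert (ts : t ** t^-1 = s ** s^-1) by (apply alpha_mulV_inj; congruence).
    apply DomE; exists (s^-1 ** t); split.
    + rewrite (q_mul hq), (q_inv hq), k1, l1, g_assoc, g_mulVl, g_mul1l; reflexivity.
    + rewrite mulV_mul, ts, invK, conj_Vmul; auto.
Qed.

(* With [u], [v] the representatives of [y^-1], [(xy)^-1] at [a], the representative of [x]
   at [theta y a] is [v u^-1], and [lam (v u^-1) (lam u a)] is conjugation of [lam v a] by
   [f (v u^-1) u], which is the value of [twist x y] at [theta (x y) a]. *)
Lemma theta_comp x y w' : mult_inverse (setmul (D x) (D (g_mul x y))) (w x y) w' ->
  forall a, setmul (D (g_inv y)) (D (g_mul (g_inv y) (g_inv x))) a ->
    theta x (theta y a) = snd w' (fst (w x y) (theta (g_mul x y) a)).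
Proof.
  intros hw' a ha; rewrite <- g_inv_mul in ha; apply setmul_DomE in ha; destruct ha as [ha1 ha2].
  destruct (theta_rep ha1) as [u [k1 [k2 [k3 k4]]]], (theta_rep ha2) as [v [l1 [l2 [l3 l4]]]].
  assert (duv : u^-1 ** u = v^-1 ** v) by (apply alpha_inj; try apply idem_Vmul; congruence).
  set (p := v ** u^-1).
  assert (qp : q p = x).
  { unfold p; rewrite (q_mul hq), (q_inv hq), k1, l1, <- g_assoc, g_mulVr, g_mul1r; reflexivity. }
  assert (dp : p^-1 ** p = u ** u^-1).
  { unfold p; rewrite invM, invK; regroup (u ** (v^-1 ** v) ** u^-1); rewrite <- duv; apply conj_mulV. }
  assert (pu : p ** u = v) by (unfold p; rewrite <- is_assoc, duv, is_assoc, inv_l; reflexivity).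
  assert (rp : p ** p^-1 = v ** v^-1) by (unfold p; rewrite mulV_mul, invK, duv; apply conj_mulV).
  assert (pv : p^-1 ** v = u).
  { unfold p; rewrite invM, invK, <- is_assoc, <- duv, is_assoc, inv_l; reflexivity. }
  set (c := theta (g_mul x y) a).
  assert (hc : setmul (D x) (D (g_mul x y)) c).
  { apply setmul_Dom; [apply DomE; exists p; unfold c; rewrite l4, rp; auto | apply theta_Dom; auto]. }
  assert (tc : twist x y c = f p u).
  { rewrite <- pv; apply (twistE hc qp l1); unfold c; rewrite l4; [rewrite rp|]; reflexivity. }
  assert (htc : setmul (D x) (D (g_mul x y)) (twist x y c ** c))
    by exact (proj2 (setmul_Dom_ideal (twist x y c) hc)).
  rewrite k3, (theta_lam (s := p)).
  2: exact qp.
  2: { rewrite lam_mulV, <- k2, lam_alpha, conj_mulV, dp by apply idem_Vmul; apply alpha_mulV. }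
  rewrite lam_comp, pu.
  rewrite (proj1 (w_twist hc)), (w_inverse_snd hw' htc).
  rewrite (@twist_ext x y (twist x y c ** c) c), tc by apply (mulV_mul_same hA), twist_mulV, hc.
  unfold c; rewrite l3; reflexivity.
Qed.

Lemma w_one x a : D x a ->
  fst (w g_one x) a = a /\ snd (w g_one x) a = a /\ fst (w x g_one) a = a /\ snd (w x g_one) a = a.
Proof.
  intro ha; destruct (proj1 (DomE x a) ha) as [t [k1 k2]], (alpha_surj_mulV a) as [h [hh e]].
  assert (T1 : setmul (D g_one) (D (g_mul g_one x)) a)
    by (apply setmul_Dom; [apply Dom_one | rewrite g_mul1l; auto]).
  assert (T2 : setmul (D x) (D (g_mul x g_one)) a)
    by (apply setmul_Dom; [auto | rewrite g_mul1r; auto]).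
  assert (rh : alpha (h ** h^-1) = a ** a^-1) by (rewrite idem_mulVE; auto).
  assert (E1 : twist g_one x a = a ** a^-1).
  { rewrite (twistE T1 (q_idem hq hh) (eq_trans k1 (eq_sym (g_mul1l x))) rh k2).
    rewrite (idem_invE hh), (f_idem_l _ hh), (mulV_idem_mul t hh), is_assoc, hh,
      (alpha_mul hh (idem_mulV t)), e, k2, (idem_mulV a); reflexivity. }
  assert (E2 : twist x g_one a = a ** a^-1).
  { rewrite (twistE T2 k1 (eq_trans k1 (eq_sym (g_mul1r x))) k2 k2).
    rewrite (proj1 (f_sieben t (idem_Vmul t))), conj_mulV, k2; reflexivity. }
  rewrite (proj1 (w_twist T1)), (proj2 (w_twist T1)), (proj1 (w_twist T2)), (proj2 (w_twist T2)),
    E1, E2, inv_l, (mul_mulV hA); auto.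
Qed.

Lemma snd_w x y c s t : q s = x -> q t = g_mul x y ->
  alpha (s ** s^-1) = c ** c^-1 -> alpha (t ** t^-1) = c ** c^-1 ->
  snd (w x y) c = c ** f s (s^-1 ** t).
Proof.
  intros k1 k2 k3 k4; refine (proj2 (hw _ k1 k2 k3 k4)).
  apply setmul_Dom; apply DomE; [exists s | exists t]; auto.
Qed.

Lemma f_Vmul_mul p v : f p (p^-1 ** (p ** v)) = f p v.
Proof. rewrite is_assoc, f_idem_mid, is_assoc, inv_l by apply idem_Vmul; reflexivity. Qed.

(* Both sides reduce, with representatives [p] of [x], [u] of [y] and [v] of [y z] at [a],
   to the two sides of the cocycle identity for [p], [u], [u^-1 v]. *)
Lemma w_cocycle x y z a : setmul (setmul (D (g_inv x)) (D y)) (D (g_mul y z)) a ->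
  snd (w x (g_mul y z)) (theta x (snd (w y z) a)) =
  snd (w (g_mul x y) z) (snd (w x y) (theta x a)).
Proof.
  intros [b [c [hb [hc ->]]]]; apply setmul_DomE in hb; destruct hb as [hb1 hb2].
  assert (ha1 := proj1 (Dom_ideal c hb1)); assert (ha2 := proj1 (Dom_ideal c hb2)).
  assert (ha3 := proj2 (Dom_ideal b hc)); set (a := b ** c) in *; clearbody a.
  destruct (theta_rep ha1) as [p [k1 [k2 [k3 k4]]]].
  destruct (proj1 (DomE _ a) ha2) as [u [l1 l2]], (proj1 (DomE _ a) ha3) as [v [m1 m2]].
  assert (up : u ** u^-1 = p^-1 ** p) by (apply alpha_inj; try apply idem_mulV; try apply idem_Vmul; congruence).
  assert (vp : v ** v^-1 = p^-1 ** p) by (apply alpha_inj; try apply idem_mulV; try apply idem_Vmul; congruence).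
  assert (qpu : q (p ** u) = g_mul x y) by (rewrite (q_mul hq), k1, l1; reflexivity).
  assert (qpv : q (p ** v) = g_mul (g_mul x y) z) by (rewrite (q_mul hq), k1, m1, g_assoc; reflexivity).
  assert (rpu : alpha ((p ** u) ** (p ** u)^-1) = alpha (p ** p^-1)) by (rewrite mulV_mul_dom; auto).
  assert (rpv : alpha ((p ** v) ** (p ** v)^-1) = alpha (p ** p^-1)) by (rewrite mulV_mul_dom; auto).
  set (phi := f u (u^-1 ** v)).
  assert (ephi : phi ** phi^-1 = a ** a^-1)
    by (unfold phi; rewrite f_mulV, mul_Vmul_eq, m2 by congruence; reflexivity).
  rewrite (snd_w l1 m1 l2 m2); fold phi.
  rewrite (theta_lam (s := p) (a := a ** phi)), k3, (lam_endo p)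
    by (auto; rewrite (proj2 (mulV_mul_same hA ephi)), k2; apply idem_mulV).
  assert (ec1 : lam p a ** (lam p a)^-1 = alpha (p ** p^-1)) by (rewrite <- k3; auto).
  assert (ephi2 : lam p phi ** (lam p phi)^-1 = alpha (p ** p^-1))
    by (rewrite lam_mulV, ephi, <- k2, lam_alpha, conj_mulV by apply idem_Vmul; reflexivity).
  assert (ec : (lam p a ** lam p phi) ** (lam p a ** lam p phi)^-1 = alpha (p ** p^-1))
    by (rewrite (mulVM hA), ec1, ephi2; apply alpha_mulV).
  assert (efpu : (lam p a ** f p u) ** (lam p a ** f p u)^-1 = alpha (p ** p^-1))
    by (rewrite (mulVM hA), ec1, f_mulV, rpu; apply alpha_mulV).
  rewrite (snd_w (t := p ** v) k1 (eq_trans qpv (eq_sym (g_assoc _ _ _))) (eq_sym ec)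
    (eq_trans rpv (eq_sym ec))), f_Vmul_mul.
  rewrite (snd_w (t := p ** u) k1 qpu (eq_sym ec1) (eq_trans rpu (eq_sym ec1))), f_Vmul_mul.
  rewrite (snd_w qpu qpv (eq_trans rpu (eq_sym efpu)) (eq_trans rpv (eq_sym efpu))).
  assert (uv : (p ** u)^-1 ** (p ** v) = u^-1 ** v).
  { rewrite invM; regroup (u^-1 ** (p^-1 ** p) ** v); rewrite <- vp.
    regroup (u^-1 ** (v ** v^-1 ** v)); rewrite inv_l; reflexivity. }
  pose proof (f_cocycle p u (u^-1 ** v)) as cc; rewrite mul_Vmul_eq in cc by congruence.
  fold phi in cc; rewrite uv, <- is_assoc, cc, is_assoc; reflexivity.
Qed.

Lemma twisted_partial_action_Dom : twisted_partial_action (Dom q alpha) theta w.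
Proof.
  split; [|split; [|split; [|split; [|split; [|split; [|split; [|split; [|split; [|split]]]]]]]]].
  - intro x; split; [intros a b ha; apply Dom_ideal, ha | apply Dom_nonempty].
  - intro x; split; [|split; [|split]].
    + exact (@theta_Dom x).
    + exact (@theta_inj x).
    + exact (@theta_surj x).
    + exact (@theta_mul x).
  - intros x y; exists (twisting_inverse (twist x y)); apply w_mult_inverse.
  - intros x a; rewrite setmul_DomE; tauto.
  - intros x y a; rewrite !setmul_DomE; tauto.
  - exact Dom_one.
  - exact theta_one.
  - exact theta_setmul.
  - exact theta_comp.
  - exact w_one.
  - exact w_cocycle.
Qed.

Variable alpha_inv : A -> S.
Hypothesis alpha_invK : forall g : A, idem g -> idem (alpha_inv g) /\ alpha (alpha_inv g) = g.

Lemma alpha_inv_mulV a :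
  idem (alpha_inv (a ** a^-1)) /\ alpha (alpha_inv (a ** a^-1)) = a ** a^-1.
Proof. apply alpha_invK, idem_mulV. Qed.

Lemma cpL_extension :
  is_extension (cpL_car alpha) (cpL_rel lam f) (cpL_i alpha_inv) (cpL_j q).
Proof.
  unfold is_extension, cpL_car, cpL_rel, cpL_i, cpL_j, cpL_mul; simpl.
  split; [|split; [|split; [|split; [|split]]]].
  - intro a; destruct (alpha_inv_mulV a) as [i e]; rewrite (idem_mulVE i), e; reflexivity.
  - intros a b.
    destruct (alpha_inv_mulV a) as [ia ea], (alpha_inv_mulV b) as [ib eb], (alpha_inv_mulV (a ** b)) as [iab eab].
    set (g := alpha_inv (a ** a^-1)) in *; set (h := alpha_inv (b ** b^-1)) in *.
    f_equal.
    + rewrite lam_idem, (proj1 (f_sieben g ib)), (idem_invE ia) by exact ia.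
      assert (ghg : g ** h ** g = g ** h)
        by (rewrite <- is_assoc, (idem_comm ib ia), is_assoc, ia; reflexivity).
      rewrite ghg, alpha_mul, ea, eb, <- (mulVM hA) by auto.
      symmetry; regroup ((a ** (a ** a^-1)) ** b ** ((a ** b) ** (a ** b)^-1)).
      rewrite (mul_mulV hA a); apply (mul_mulV hA).
    + apply alpha_inj; [exact iab | apply idem_mul; auto|].
      rewrite eab, alpha_mul, ea, eb by auto; apply (mulVM hA).
  - intros a b e; exact (f_equal fst e).
  - intros u v r _ _ ->; apply (q_mul hq).
  - intro x; destruct (proj1 (proj2 hq) x) as [s k]; exists (alpha (s ** s^-1), s); simpl.
    rewrite (idem_mulVE (alpha_mulV s)); auto.
  - intros [a s] hu; simpl in *; split.
    + intro k; apply (idem_of_q_one hS hq) in k; exists a; f_equal; symmetry.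
      apply alpha_inj; [apply alpha_inv_mulV | exact k|].
      rewrite (proj2 (alpha_inv_mulV a)), hu, (idem_mulVE k); reflexivity.
    + intros [a0 e]; injection e as e1 e2; rewrite e2; apply (q_idem hq), alpha_inv_mulV.
Qed.

Lemma cpT_extension :
  is_extension (cpT_car (Dom q alpha)) (cpT_rel (Dom q alpha) theta w) (@cpT_i A H) (@cpT_j A H).
Proof.
  unfold is_extension, cpT_car, cpT_rel, cpT_i, cpT_j; simpl.
  split; [|split; [|split; [|split; [|split]]]].
  - intro a; apply Dom_one.
  - intros a b; exists a; rewrite g_inv_one, !theta_one, (proj1 (proj2 (w_one (Dom_one (a ** b))))),
      g_mul1l; auto using Dom_one.
  - intros a b e; exact (f_equal fst e).
  - intros u v r _ _ [a' [_ [_ ->]]]; reflexivity.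
  - intro x; destruct (Dom_nonempty x) as [a ha]; exists (a, x); auto.
  - intros [a x] hu; simpl; split.
    + intro k; exists a; rewrite k; reflexivity.
    + intros [a0 e]; injection e; auto.
Qed.

Definition cp_iso (u : A * S) : A * H := (fst u, q (snd u)).

(* The element [a lam_s(b)] lies in the groups of both [s (t t^-1)] and [s t], and
   [f (s t t^-1) ((s t t^-1)^-1 s t) = f s t] by Sieben's condition. *)
Lemma cp_iso_mul (u v : A * S) : cpL_car alpha u -> cpL_car alpha v ->
  cpT_rel (Dom q alpha) theta w (cp_iso u) (cp_iso v) (cp_iso (cpL_mul lam f u v)).
Proof.
  destruct u as [a s], v as [b t]; unfold cpL_car, cp_iso, cpT_rel, cpL_mul; simpl; intros hu hv.
  assert (ha : D (q s) a) by (apply DomE; exists s; auto).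
  destruct (theta_surj ha) as [a' [ha' ta']], (theta_rep ha') as [s' [k1 [k2 [k3 k4]]]].
  assert (ss : s' = s) by (apply (q_mulV_inj hS hq); [exact k1 | apply alpha_mulV_inj; congruence]).
  subst s'; exists a'; repeat split; auto.
  assert (tab : theta (q s) (a' ** b) = a ** lam s b).
  { rewrite (theta_lam (s := s)), (lam_endo s), <- k3, ta'; auto.
    rewrite (mulVM hA), <- k2; regroup (alpha (s^-1 ** s) ** ((b ** b^-1) ** alpha (s^-1 ** s))).
    rewrite (idem_comm (idem_mulV b) (alpha_Vmul s)).
    regroup ((alpha (s^-1 ** s) ** alpha (s^-1 ** s)) ** (b ** b^-1)); rewrite (alpha_Vmul s); reflexivity. }
  set (c := a ** lam s b) in *.
  assert (ec : c ** c^-1 = alpha (s ** (t ** t^-1) ** s^-1)).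
  { unfold c; rewrite (mulVM hA), lam_mulV, hv, lam_alpha, hu, <- alpha_mul
      by (try apply idem_mulV; apply idem_conj, idem_mulV).
    f_equal; regroup ((s ** s^-1 ** s) ** (t ** t^-1) ** s^-1); rewrite inv_l; reflexivity. }
  assert (ht := idem_mulV t).
  rewrite tab, (snd_w (s := s ** (t ** t^-1)) (t := s ** t)), (q_mul hq);
    [| apply (q_idem_mulr hq _ ht) | apply (q_mul hq) | rewrite mulV_mul_idem, ec by exact ht; reflexivity
     | rewrite mulV_mul, ec; reflexivity].
  do 2 f_equal; symmetry.
  replace ((s ** (t ** t^-1))^-1 ** (s ** t)) with ((t ** t^-1) ** ((s^-1 ** s) ** t))
    by (rewrite invM, (idem_invE ht); rewrite ?is_assoc; reflexivity).
  rewrite <- f_idem_mid by exact ht.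
  replace ((t ** t^-1) ** ((t ** t^-1) ** ((s^-1 ** s) ** t))) with ((s^-1 ** s) ** t).
  - rewrite f_idem_mid, is_assoc, inv_l by apply idem_Vmul; reflexivity.
  - symmetry; regroup ((t ** t^-1 ** (t ** t^-1)) ** (s^-1 ** s) ** t).
    rewrite ht, (idem_comm ht (idem_Vmul s)); regroup ((s^-1 ** s) ** (t ** t^-1 ** t)).
    rewrite inv_l; reflexivity.
Qed.

Lemma crossed_products_equivalent : equivalent_extensions
  (cpL_car alpha) (cpL_rel lam f) (cpL_i alpha_inv) (cpL_j q)
  (cpT_car (Dom q alpha)) (cpT_rel (Dom q alpha) theta w) (@cpT_i A H) (@cpT_j A H).
Proof.
  split; [exact cpL_extension | split; [exact cpT_extension|]].
  unfold cpL_car, cpL_rel, cpL_i, cpL_j, cpT_car, cpT_i, cpT_j.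
  exists cp_iso; split; [|split; [|split; [|split; [|split]]]].
  - intros [a s] hu; apply DomE; exists s; auto.
  - intros [a s] [b t] hu hv e; injection e as e1 e2; simpl in *; subst b; f_equal.
    apply (q_mulV_inj hS hq); [exact e2 | apply alpha_mulV_inj; congruence].
  - intros [a x] hu; destruct (proj1 (DomE x a) hu) as [s [k1 k2]].
    exists (a, s); unfold cp_iso; simpl; rewrite k1; auto.
  - intros u v r hu hv ->; apply cp_iso_mul; auto.
  - intro a; unfold cp_iso; simpl; rewrite (q_idem hq); [reflexivity | apply alpha_inv_mulV].
  - reflexivity.
Qed.

End TwistedModule.

Theorem proposition6p11
  (S A : InvSemigroup) (H : Group) (q : S -> H)
  (hS : E_unitary S) (hA : semilattice_of_groups A)
  (hq : min_group_quotient q)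
  (alpha : S -> A) (lam : S -> A -> A) (f : S -> S -> A)
  (hLam : sieben_twisted_module alpha lam f)
  (* theta_x(a) = lam_s(a), s in x the element with alpha(s^-1 s) = a a^-1 *)
  (theta : H -> A -> A)
  (htheta : forall x a, Dom q alpha (g_inv x) a ->
     forall s, q s = x -> alpha (s^-1 ** s) = a ** a^-1 -> theta x a = lam s a)
  (* w_{x,y} a = f(s, s^-1 t) a,  a w_{x,y} = a f(s, s^-1 t) *)
  (w : H -> H -> (A -> A) * (A -> A))
  (hw : forall x y a,
     setmul (Dom q alpha x) (Dom q alpha (g_mul x y)) a ->
     forall s t, q s = x -> q t = g_mul x y ->
       alpha (s ** s^-1) = a ** a^-1 -> alpha (t ** t^-1) = a ** a^-1 ->
       fst (w x y) a = f s (s^-1 ** t) ** a /\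
       snd (w x y) a = a ** f s (s^-1 ** t))
  (* alpha_inv : the inverse E(A) -> E(S) of alpha *)
  (alpha_inv : A -> S)
  (halpha_inv : forall g : A, idem g -> idem (alpha_inv g) /\ alpha (alpha_inv g) = g) :
  twisted_partial_action (Dom q alpha) theta w /\
  equivalent_extensions
    (cpL_car alpha) (cpL_rel lam f) (cpL_i alpha_inv) (cpL_j q)
    (cpT_car (Dom q alpha)) (cpT_rel (Dom q alpha) theta w) (@cpT_i A H) (@cpT_j A H).
Proof.
  destruct hLam as [[[alpha_idem [alpha_mul [alpha_inj alpha_surj]]]
    [lam_relinv [f_in_A [lam_idem [lam_alpha [lam_comp [_ f_cocycle]]]]]]] f_sieben].
  assert (lam_endo : forall s, endo (lam s)) by (intro s; exact (proj1 (lam_relinv s))).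
  split.
  - eapply twisted_partial_action_Dom; eauto.
  - eapply crossed_products_equivalent; eauto.
Qed.
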